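(* Let $E_1,\dots,E_N$ be a symmetric sequence of events with correlation functions $G_k$ and correlation coefficients $C_k$. Then for every $k$ with $2\le k\le N$ and all $r_1,\dots,r_k\in\{0,1\}$, $$G_k(r_1,\dots,r_k)=N^{-k}C_k\prod_{l=1}^{k}(-1)^{r_l+1}.$$
   Context: $\mathbbm{1}_E$ is the indicator function of an event $E$. A finite sequence of events $E_1,\dots,E_N$ on a common probability space is called symmetric if for all $r_1,\dots,r_N\in\{0,1\}$ and all permutations $\sigma$ of $\{1,\dots,N\}$, $P(\mathbbm{1}_{E_1}=r_1,\dots,\mathbbm{1}_{E_N}=r_N)=P(\mathbbm{1}_{E_1}=r_{\sigma(1)},\dots,\mathbbm{1}_{E_N}=r_{\sigma(N)})$. For $1\le k\le N$ the probability function of order $k$ is $P_k(r_1,\dots,r_k):=\sum_{r_{k+1},\dots,r_N\in\{0,1\}}P(\mathbbm{1}_{E_1}=r_1,\dots,\mathbbm{1}_{E_N}=r_N)$. The correlation functions $G_k:\{0,1\}^k\to\mathbb{R}$ are defined by $G_1:=P_1$ and, recursively for $1<k\le N$, $$G_k(r_1,\dots,r_k):=P_k(r_1,\dots,r_k)-\sum_{\sigma}\sum_{l=1}^{k-1}\frac{1}{(l-1)!\,(k-l)!}G_l(r_1,r_{\sigma(2)},\dots,r_{\sigma(l)})\,P_{k-l}(r_{\sigma(l+1)},\dots,r_{\sigma(k)}),$$ where $\sigma$ runs over all permutations of $\{2,\dots,k\}$. The correlation coefficient of order $k$ is $C_k:=N^kG_k(1,\dots,1)$. *)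

From HB Require Import structures.
From mathcomp Require Import all_boot all_order all_algebra all_fingroup.
Set Implicit Arguments. Unset Strict Implicit. Unset Printing Implicit Defensive.
Import Order.TTheory GRing.Theory Num.Theory.
Local Open Scope ring_scope.

(* A finite probability space: sample space Omega, mass function w
   (w >= 0, sum w = 1), and events E : 'I_N -> {set Omega}
   (E i is the event E_{i+1} of the paper, 0-based indexing). *)

Section Corr.
Variables (R : realFieldType) (Omega : finType) (w : Omega -> R) (N : nat)
  (E : 'I_N -> {set Omega}).

Definition Pfull (r : {ffun 'I_N -> bool}) : R :=
  \sum_(om : Omega | [forall i : 'I_N, (om \in E i) == r i]) w om.

Definition symmetric_events : Prop :=
  forall (r : {ffun 'I_N -> bool}) (s : 'S_N),
    Pfull r = Pfull [ffun i => r (s i)].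

Definition Pk (r : seq bool) : R :=
  \sum_(r' : {ffun 'I_N -> bool} |
          [forall i : 'I_N, (i < size r)%N ==> (r' i == nth false r i)])
    Pfull r'.

(* For r = [:: r_1; ...; r_k], sigma ranges over permutations of {2..k},
   encoded as s : 'S_(k-1) acting on 0-based positions 1..k-1 of r. *)
Fixpoint Gfuel (fuel : nat) (r : seq bool) : R :=
  match fuel with
  | 0%N => Pk r
  | fuel'.+1 =>
      let k := size r in
      let r1 := head false r in
      Pk r -
      \sum_(s : 'S_(k.-1))
        \sum_(1 <= l < k)
          let rs := [seq nth false r (s j).+1 | j <- enum 'I_(k.-1)] in
          ((l.-1)`!%:R * (k - l)`!%:R)^-1 *
          Gfuel fuel' (r1 :: take l.-1 rs) * Pk (drop l.-1 rs)
  end.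

Definition G (r : seq bool) : R := Gfuel (size r) r.

Definition Ccoef (k : nat) : R := (N%:R) ^+ k * G (nseq k true).

End Corr.

From HB Require Import structures.
From mathcomp Require Import all_boot all_order all_algebra all_fingroup.
From mathcomp Require Import ring zify.
Set Implicit Arguments. Unset Strict Implicit. Unset Printing Implicit Defensive.
Import Order.TTheory GRing.Theory Num.Theory.
Local Open Scope ring_scope.

(** Flipping one argument of the correlation function of order [k >= 2]
changes its sign: [\sum_b G (u ++ b :: v) = 0].  Flipping the arguments one at
a time then gives [G r = (prod of signs) * G (nseq k true)], and
[C_k = N^k * G (nseq k true)].

For the first argument, sum the recursion over [r_1]: the terms with [l >= 2]
vanish by induction, and the terms with [l = 1] add up to the marginal
[P_(k-1)] of the tail, which cancels the marginal of [P_k].  [G_k] is symmetric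
in [r_2, ..., r_k], so any other argument may be moved to the last place.
Sort the permutations by the position [p] to which they send it.  When
[l - 1 <= p] that argument lies in the [P]-factor, and summing over it
marginalizes it away; otherwise it lies in the [G]-factor, and the sum vanishes
by induction.  Counting the surviving terms turns the weights
[1/((l-1)! (k-l)!)] into those of order [k - 1], so the sum of the recursion
becomes [(P_(k-1) - G_(k-1)) + G_(k-1)], which again cancels the marginal of
[P_k]. *)

Section Permute.
Variables (T : eqType) (x0 : T).

Definition permute n (s : 'S_n) (x : seq T) := [seq nth x0 x (s j) | j <- enum 'I_n].

Lemma size_permute n (s : 'S_n) x : size (permute s x) = n.
Proof. by rewrite size_map size_enum_ord. Qed.

Lemma nth_permute n (s : 'S_n) x (i : 'I_n) : nth x0 (permute s x) i = nth x0 x (s i).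
Proof. by rewrite (nth_map i) ?size_enum_ord // nth_ord_enum. Qed.

Lemma permuteM n (s t : 'S_n) x : permute s (permute t x) = permute (s * t)%g x.
Proof. by apply: eq_map => j; rewrite nth_permute permM. Qed.

Lemma perm_eq_permute n (s : 'S_n) x : size x = n -> perm_eq (permute s x) x.
Proof.
move=> /eqP x_n; apply/(@tuple_permP _ _ _ (Tuple x_n)); exists s.
by apply: eq_map => j; rewrite (tnth_nth x0).
Qed.

Lemma permute_of_perm_eq x y : perm_eq x y -> exists t : 'S_(size x), y = permute t x.
Proof.
rewrite perm_sym => /(@tuple_permP _ _ _ (in_tuple x))[t ->]; exists t.
by apply: eq_map => j; rewrite (tnth_nth x0).
Qed.

Definition insert_at p b (z : seq T) := take p z ++ b :: drop p z.

Lemma size_insert_at p b z : (p <= size z)%N -> size (insert_at p b z) = (size z).+1.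
Proof. by move=> le_pz; rewrite size_cat size_takel //= size_drop addnS subnKC. Qed.

Lemma perm_insert_rcons (u v : seq T) b : perm_eq (u ++ b :: v) (rcons (u ++ v) b).
Proof. by rewrite -cats1 -catA perm_cat2l -cat1s perm_catC. Qed.

Lemma nth_insert_lift n (p : 'I_n.+1) (z : seq T) b (j : 'I_n) : size z = n ->
  nth x0 (insert_at p b z) (lift p j) = nth x0 z j.
Proof.
move=> z_n; have le_pn : (p <= n)%N by rewrite -ltnS.
rewrite nth_cat size_takel ?z_n //= /bump; case: (leqP p j) => [le_pj | lt_jp].
  by rewrite add1n ltnNge ltnW //= subSn //= nth_drop subnKC.
by rewrite add0n lt_jp nth_take.
Qed.

Lemma permute_lift_max n (p : 'I_n.+1) (s : 'S_n) y b : size y = n ->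
  permute (lift_perm p ord_max s) (rcons y b) = insert_at p b (permute s y).
Proof.
move=> y_n; have z_n := size_permute s y; have le_pn : (p <= n)%N by rewrite -ltnS.
apply: (@eq_from_nth _ x0) => [|k].
  by rewrite size_permute size_insert_at z_n.
rewrite size_permute => lt_kn; have -> : k = Ordinal lt_kn by [].
rewrite nth_permute; case: (unliftP p (Ordinal lt_kn)) => [j|] ->.
  by rewrite lift_perm_lift nth_insert_lift // lift_max nth_rcons y_n ltn_ord nth_permute.
by rewrite lift_perm_id nth_cat size_takel ?z_n //= ltnn subnn nth_rcons y_n ltnn eqxx.
Qed.
End Permute.

Lemma sum_perm_lift (V : nmodType) n (j : 'I_n.+1) (F : 'S_n.+1 -> V) :
  \sum_(s : 'S_n.+1) F s = \sum_(i : 'I_n.+1) \sum_(s : 'S_n) F (lift_perm i j s).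
Proof.
have lift_bij : bijective (fun p : 'I_n.+1 * 'S_n => lift_perm p.1 j p.2).
  apply: inj_card_bij => [[i s] [i' s'] /= ss'|]; last first.
    by rewrite card_prod card_ord !card_Sn factS.
  have ii' : i = i'.
    by apply: (@perm_inj _ (lift_perm i' j s')); rewrite lift_perm_id -ss' lift_perm_id.
  congr pair => //; apply/permP => k; apply: (@lift_inj _ j).
  by rewrite -(lift_perm_lift i) ss' ii' lift_perm_lift.
by rewrite pair_big (reindex _ (onW_bij _ lift_bij)).
Qed.

Lemma flip_antisym_prod_sign (V : ringType) n (f : seq bool -> V) :
  (forall u v, (size u + size v).+1 = n -> f (u ++ false :: v) = - f (u ++ true :: v)) ->
  forall x, size x = n -> f x = \prod_(b <- x) (-1) ^+ b.+1 * f (nseq n true).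
Proof.
elim: n f => [|n IHn] f f_flip [|b x] // => [_ | [x_n]]; first by rewrite big_nil mul1r.
have f_b : f (b :: x) = (-1) ^+ b.+1 * f (true :: x).
  case: b; first by rewrite expr2 mulN1r opprK mul1r.
  by rewrite expr1 mulN1r (f_flip [::] x) //= x_n.
rewrite f_b (IHn (fun y => f (true :: y))) ?big_cons ?mulrA // => u v uv.
by apply: (f_flip (true :: u)); rewrite /= addSn uv.
Qed.

Lemma sum_if_leq (V : nmodType) n m (X : V) :
  \sum_(p < n) (if (m <= p)%N then X else 0) = X *+ (n - m).
Proof. by rewrite -big_mkcond -sumr_const_nat big_geq_mkord. Qed.

Section Correlations.
Variables (R : realFieldType) (Omega : finType) (w : Omega -> R) (N : nat)
  (E : 'I_N -> {set Omega}).
Hypothesis w_sum1 : \sum_(om : Omega) w om = 1.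
Hypothesis E_sym : symmetric_events w E.

Definition extends (a : seq bool) (r : {ffun 'I_N -> bool}) :=
  [forall i : 'I_N, (i < size a)%N ==> (r i == nth false a i)].

Lemma PkE a : Pk w E a = \sum_(r | extends a r) Pfull w E r.
Proof. by []. Qed.

Lemma Pk_nil : Pk w E [::] = 1.
Proof.
rewrite PkE (eq_bigl predT) => [|r]; last exact/forallP.
rewrite -w_sum1 /Pfull (exchange_big_dep predT) //=; apply: eq_bigr => om _.
rewrite (big_pred1 [ffun i => om \in E i]) // => r /=.
apply/forallP/eqP => [r_om | -> i]; last by rewrite ffunE.
by apply/ffunP => i; rewrite ffunE (eqP (r_om i)).
Qed.

Lemma extends_rcons a b r (i0 : 'I_N) : i0 = size a :> nat ->
  extends (rcons a b) r = extends a r && (r i0 == b).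
Proof.
move=> i0E; apply/forallP/andP => [ext_r | [/forallP ext_r r_i0] i].
  split; last by have := ext_r i0; rewrite i0E size_rcons ltnSn nth_rcons ltnn eqxx.
  apply/forallP => i; apply/implyP => lt_i; have := ext_r i.
  by rewrite size_rcons nth_rcons lt_i ltnS ltnW.
rewrite size_rcons ltnS nth_rcons leq_eqVlt; apply/implyP.
case/orP => [/eqP i_a | lt_i]; last by rewrite lt_i (implyP (ext_r i)).
by rewrite i_a ltnn eqxx (ord_inj (etrans i_a (esym i0E))).
Qed.

Lemma Pk_rcons a : (size a < N)%N ->
  Pk w E (rcons a true) + Pk w E (rcons a false) = Pk w E a.
Proof.
move=> lt_a; pose i0 := Ordinal lt_a.
rewrite !PkE [RHS](bigID (fun r : {ffun _ -> bool} => r i0)) /=.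
congr (_ + _); apply: eq_bigl => r.
  by rewrite (extends_rcons _ _ (i0 := i0)) // eqb_id.
by rewrite (extends_rcons _ _ (i0 := i0)) // eqbF_neg.
Qed.

Definition vec_of_seq (s : seq bool) : {ffun 'I_N -> bool} :=
  [ffun i : 'I_N => nth false s i].

Lemma Pfull_perm s t : size t = N -> perm_eq s t ->
  Pfull w E (vec_of_seq s) = Pfull w E (vec_of_seq t).
Proof.
move=> /eqP t_N /(@tuple_permP _ _ s (Tuple t_N))[p sE].
rewrite [RHS](E_sym _ p); congr Pfull; apply/ffunP => i.
by rewrite !ffunE sE -(tnth_nth false) tnth_mktuple (tnth_nth false).
Qed.

Definition override (a : seq bool) (r : {ffun 'I_N -> bool}) :=
  [ffun i : 'I_N => if (i < size a)%N then nth false a i else r i].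

Lemma overrideK a b r : size a = size b -> extends a r -> override a (override b r) = r.
Proof.
move=> ab /forallP ext_r; apply/ffunP => i; rewrite !ffunE -ab.
by case: ifP => [lt_i | ->] //; rewrite (eqP (implyP (ext_r i) lt_i)).
Qed.

Lemma extends_override a r : extends a (override a r).
Proof. by apply/forallP => i; rewrite ffunE; apply/implyP => ->. Qed.

Definition seq_of_vec (r : {ffun 'I_N -> bool}) := [seq r i | i <- enum 'I_N].

Lemma size_seq_of_vec r : size (seq_of_vec r) = N.
Proof. by rewrite size_map size_enum_ord. Qed.

Lemma nth_seq_of_vec r (i : 'I_N) : nth false (seq_of_vec r) i = r i.
Proof. by rewrite (nth_map i) ?size_enum_ord // nth_ord_enum. Qed.

Lemma extends_vecE a r : extends a r ->
  r = vec_of_seq (a ++ drop (size a) (seq_of_vec r)).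
Proof.
move=> /forallP ext_r; apply/ffunP => i; rewrite ffunE nth_cat.
case: ltnP => [lt_i | le_i]; first by rewrite (eqP (implyP (ext_r i) lt_i)).
by rewrite nth_drop subnKC // nth_seq_of_vec.
Qed.

Lemma override_vec_of_seq a b d : size a = size b ->
  override b (vec_of_seq (a ++ d)) = vec_of_seq (b ++ d).
Proof. by move=> ab; apply/ffunP => i; rewrite !ffunE !nth_cat ab; case: ltnP. Qed.

Lemma Pk_perm a b : (size a <= N)%N -> perm_eq a b -> Pk w E a = Pk w E b.
Proof.
(* Overwriting the prefix [a] by [b] is a bijection between the two ranges of
   summation, and symmetry equates the corresponding summands. *)
move=> a_N a_b; have ab := perm_size a_b.
rewrite !PkE [RHS](reindex_onto (override b) (override a)) => [|r]; last exact: overrideK.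
apply: eq_big => r.
  apply/idP/andP => [ext_r | [_ /eqP <-]]; last exact: extends_override.
  by rewrite (overrideK ab) // extends_override.
move=> /extends_vecE rE; rewrite rE override_vec_of_seq //.
apply: Pfull_perm; last by rewrite perm_cat2r.
by rewrite size_cat size_drop size_seq_of_vec -ab subnKC.
Qed.

Lemma Pk_marginal a c : (size a + size c < N)%N ->
  \sum_(b : bool) Pk w E (a ++ b :: c) = Pk w E (a ++ c).
Proof.
move=> lt_ac; have size_abc b : (size (a ++ b :: c) <= N)%N by rewrite size_cat addnS.
rewrite big_bool !(Pk_perm (size_abc _) (perm_insert_rcons _ _ _)).
by apply: Pk_rcons; rewrite size_cat.
Qed.

(* The weight [1/((l-1)! (k-l)!)] of the recursion, with [n = k - 1], [m = l - 1]. *)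
Definition corr_weight n m : R := ((m`!)%:R * ((n - m)`!)%:R)^-1.

Lemma natr_fact_neq0 n : (n`!)%:R != 0 :> R.
Proof. by rewrite pnatr_eq0 -lt0n fact_gt0. Qed.

Lemma corr_weight_diag n : corr_weight n n = (n`!%:R)^-1.
Proof. by rewrite /corr_weight subnn mulr1. Qed.

Lemma corr_weight0 n : corr_weight n 0 = (n`!%:R)^-1.
Proof. by rewrite /corr_weight subn0 mul1r. Qed.

Lemma corr_weightS m n : (m <= n)%N -> corr_weight n.+1 m *+ (n.+1 - m) = corr_weight n m.
Proof.
move=> le_mn; rewrite /corr_weight subSn // factS natrM -mulr_natr.
have nm1 : 1 + (n - m)%:R != 0 :> R by rewrite addrC natr1 pnatr_eq0.
by field; rewrite nm1 !natr_fact_neq0.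
Qed.

Lemma Gfuel_small f r : (size r <= 1)%N -> Gfuel w E f r = Pk w E r.
Proof. by case: f => // f r_1; rewrite /= big1 ?subr0 // => s _; rewrite big_geq. Qed.

Lemma G_small r : (size r <= 1)%N -> G w E r = Pk w E r.
Proof. exact: Gfuel_small. Qed.

Lemma Gfuel_enough f g r : (size r <= f.+1)%N -> (size r <= g.+1)%N ->
  Gfuel w E f r = Gfuel w E g r.
Proof.
elim: f g r => [|f IHf] [|g] r r_f r_g; try by rewrite !Gfuel_small.
rewrite /=; congr (_ - _); apply: eq_bigr => s _; apply: eq_big_nat => l /andP[l_1 l_r].
by congr (_ * _ * _); apply: IHf; rewrite /= size_take_min minnC ltnS geq_min; lia.
Qed.

Lemma G_cons n r1 x : size x = n -> G w E (r1 :: x) = Pk w E (r1 :: x) -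
  \sum_(s : 'S_n) \sum_(m < n) corr_weight n m *
    (G w E (r1 :: take m (permute false s x)) * Pk w E (drop m (permute false s x))).
Proof.
move=> <-; rewrite {1}/G /=; congr (_ - _); apply: eq_bigr => s _.
rewrite big_add1 big_mkord; apply: eq_bigr => m _; rewrite mulrA; congr (_ * _ * _).
rewrite /G; apply: Gfuel_enough => //=.
by rewrite ltnS size_take_min geq_min (ltnW (ltn_ord m)).
Qed.

Lemma G_tail_perm r1 x y : (size x < N)%N -> perm_eq x y -> G w E (r1 :: x) = G w E (r1 :: y).
Proof.
move=> x_N /(permute_of_perm_eq false)[t ->].
rewrite (G_cons r1 (erefl (size x))) (G_cons r1 (size_permute false t x)); congr (_ - _).
  by apply: Pk_perm; rewrite // perm_cons perm_sym perm_eq_permute.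
by rewrite (reindex_inj (mulIg t)); apply: eq_bigr => s _; rewrite permuteM.
Qed.

Lemma sum_G_cons n (r1 : bool -> bool) (x : bool -> seq bool) :
  (forall b, size (x b) = n) ->
  \sum_b G w E (r1 b :: x b) = \sum_b Pk w E (r1 b :: x b) -
  \sum_(s : 'S_n) \sum_(m < n) corr_weight n m *
    \sum_b G w E (r1 b :: take m (permute false s (x b))) *
           Pk w E (drop m (permute false s (x b))).
Proof.
move=> x_n; under eq_bigr do rewrite (G_cons _ (x_n _)).
rewrite sumrB; congr (_ - _); rewrite exchange_big; apply: eq_bigr => s _.
by rewrite exchange_big; apply: eq_bigr => m _; rewrite mulr_sumr.
Qed.

Lemma G_head_flip x : (0 < size x < N)%N -> \sum_b G w E (b :: x) = 0.
Proof.
have [n] := ubnP (size x); elim: n x => // n IHn x lt_xn.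
case x_k: (size x) => [|k] //= k_N.
rewrite (@sum_G_cons k.+1 id (fun=> x) (fun=> x_k)) (@Pk_marginal [::] x) ?x_k //=.
have head_term (s : 'S_k.+1) : \sum_(m < k.+1) corr_weight k.+1 m *
    \sum_b G w E (b :: take m (permute false s x)) * Pk w E (drop m (permute false s x)) =
    corr_weight k.+1 0 * Pk w E x.
  rewrite big_ord_recl [X in _ + X]big1 ?addr0 => [|m _]; last first.
    have m_k := ltn_ord m; rewrite -mulr_suml IHn ?mul0r ?mulr0 //;
      rewrite size_take_min size_permute lift0; lia.
  rewrite /= take0 drop0 -mulr_suml (eq_bigr _ (fun b _ => G_small _)) //.
  rewrite (@Pk_marginal [::] [::]) /= ?Pk_nil ?mul1r; last by lia.
  by congr (_ * _); apply: Pk_perm; rewrite ?perm_eq_permute // size_permute ltnW.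
rewrite (eq_bigr _ (fun s _ => head_term s)) sumr_const card_Sn corr_weight0.
by rewrite -mulrnAl -mulr_natr mulVf ?natr_fact_neq0 // mul1r subrr.
Qed.

Lemma sum_G_Pk_insert_at r1 z p m : (p <= size z)%N -> (m <= size z)%N -> (size z < N)%N ->
  (forall u v, (size u + size v < size z)%N -> \sum_b G w E (r1 :: u ++ b :: v) = 0) ->
  \sum_b G w E (r1 :: take m (insert_at p b z)) * Pk w E (drop m (insert_at p b z)) =
  if (m <= p)%N then G w E (r1 :: take m z) * Pk w E (drop m z) else 0.
Proof.
move=> le_pz le_mz z_N flip; rewrite /insert_at.
have tp : size (take p z) = p by rewrite size_takel.
case: leqP => [le_mp | lt_pm].
  set y := drop m z; have zE : take p z = take m z ++ take (p - m) y.
    by rewrite -takeD subnKC.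
  have dE : drop p z = drop (p - m) y by rewrite /y drop_drop subnK.
  have tm : size (take m z) = m by rewrite size_takel.
  rewrite zE dE; under eq_bigr do rewrite -catA take_size_cat // drop_size_cat //.
  rewrite -mulr_sumr Pk_marginal ?cat_take_drop //.
  by rewrite -size_cat cat_take_drop size_drop (leq_ltn_trans (leq_subr _ _)).
under eq_bigr do rewrite take_cat drop_cat tp ltnNge (ltnW lt_pm) /= -(subnSK lt_pm) /=.
by rewrite -mulr_suml flip ?mul0r // tp size_take_min size_drop; lia.
Qed.

Lemma G_last_flip n r1 y : size y = n -> (n.+2 <= N)%N ->
  (forall u v, (size u + size v < n)%N -> \sum_b G w E (r1 :: u ++ b :: v) = 0) ->
  \sum_b G w E (r1 :: rcons y b) = 0.
Proof.
move=> y_n n_N flip; have y_b b : size (rcons y b) = n.+1 by rewrite size_rcons y_n.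
rewrite (@sum_G_cons n.+1 (fun=> r1) (rcons y) y_b).
under [X in X - _]eq_bigr do rewrite -cats1.
rewrite (@Pk_marginal (r1 :: y) [::]) ?cats0 /= ?y_n ?addn0 //.
have tail_term (s : 'S_n) : \sum_(p < n.+1) \sum_(m < n.+1) corr_weight n.+1 m *
    \sum_b G w E (r1 :: take m (permute false (lift_perm p ord_max s) (rcons y b))) *
           Pk w E (drop m (permute false (lift_perm p ord_max s) (rcons y b))) =
    \sum_(m < n) corr_weight n m *
      (G w E (r1 :: take m (permute false s y)) * Pk w E (drop m (permute false s y))) +
    (n`!%:R)^-1 * G w E (r1 :: y).
  have z_n : size (permute false s y) = n := size_permute false s y.
  have ins (p m : 'I_n.+1) := @sum_G_Pk_insert_at r1 (permute false s y) p m.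
  rewrite z_n in ins; have {}ins p m := ins p m (ltn_ord p) (ltn_ord m) (ltnW n_N) flip.
  under eq_bigr => p _ do under eq_bigr => m _ do under eq_bigr => b _ do
    rewrite permute_lift_max //.
  rewrite exchange_big /=.
  under eq_bigr => m _ do rewrite -mulr_sumr (eq_bigr _ (fun p _ => ins p m)) sum_if_leq
    mulrnAr -mulrnAl (@corr_weightS m n (ltn_ord m)).
  rewrite big_ord_recr /= take_oversize ?drop_oversize ?z_n // Pk_nil mulr1 corr_weight_diag.
  by rewrite (G_tail_perm r1 _ (perm_eq_permute false s y_n)) // z_n ltnW.
rewrite (sum_perm_lift ord_max) exchange_big (eq_bigr _ (fun s _ => tail_term s)) big_split /=.
rewrite [X in _ - (X + _)](_ : _ = Pk w E (r1 :: y) - G w E (r1 :: y)); last first.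
  by rewrite (G_cons _ y_n) subKr.
rewrite sumr_const card_Sn -mulrnAl -mulr_natr mulVf ?natr_fact_neq0 // mul1r.
by rewrite subrK subrr.
Qed.

Lemma G_tail_flip r1 u v : ((size u + size v).+2 <= N)%N ->
  \sum_b G w E (r1 :: u ++ b :: v) = 0.
Proof.
have [n] := ubnP (size u + size v); elim: n u v => // n IHn u v lt_uvn uv_N.
have to_last b : G w E (r1 :: u ++ b :: v) = G w E (r1 :: rcons (u ++ v) b).
  by apply: G_tail_perm; rewrite ?perm_insert_rcons // size_cat /= addnS.
rewrite (eq_bigr _ (fun b _ => to_last b)).
apply: (@G_last_flip (size u + size v)); rewrite ?size_cat // => u' v' lt_uv'.
by apply: IHn; lia.
Qed.

Lemma G_flip u v : (0 < size u + size v < N)%N -> \sum_b G w E (u ++ b :: v) = 0.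
Proof.
case: u => [|r1 u] /andP[uv_0 uv_N]; first by apply: G_head_flip; rewrite uv_0.
by apply: G_tail_flip; rewrite -addSn.
Qed.

Lemma G_sign r : (2 <= size r <= N)%N ->
  G w E r = \prod_(b <- r) (-1) ^+ b.+1 * G w E (nseq (size r) true).
Proof.
case/andP=> r_2 r_N; apply: flip_antisym_prod_sign => // u v uv.
apply/eqP; rewrite -addr_eq0 addrC.
by have := @G_flip u v; rewrite big_bool => -> //; rewrite -ltnS uv r_2.
Qed.
End Correlations.

Theorem mainTheorem5 (R : realFieldType) (Omega : finType) (w : Omega -> R)
  (N : nat) (E : 'I_N -> {set Omega})
  (w_ge0 : forall om, 0 <= w om) (w_sum1 : \sum_(om : Omega) w om = 1)
  (hsym : symmetric_events w E) :
  forall (k : nat), (2 <= k <= N)%N ->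
  forall (r : seq bool), size r = k ->
    G w E r = (N%:R) ^- k * Ccoef w E k *
              \prod_(b <- r) (-1 : R) ^+ (nat_of_bool b).+1.
Proof.
move=> k k_N r r_k.
have Nk_neq0 : (N%:R ^+ k : R) != 0 by rewrite expf_neq0 // pnatr_eq0 -lt0n; lia.
by rewrite (G_sign w_sum1 hsym) r_k // /Ccoef mulrA mulVf // mul1r mulrC.
Qed.
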